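(* Let $k,n\ge1$, $T:\{0,1\}^k\to\{0,1\}$ a truth table, and $\gamma\in\mathbb R$. For every triple $(\mathbf z^{[1]},\mathbf z^{[0]},\mathbf z^{[-1]})$ of $n$-bit strings with configuration basis numbers $\mathbf n=(n_s)_{s\in\{0,1\}^3}$, $$\mathbf E_\sigma\Big[\exp\Big(-\tfrac{i\gamma}{2}\big(\mathbf 1[\mathbf z^{[1]}\vdash\sigma]-\mathbf 1[\mathbf z^{[-1]}\vdash\sigma]\big)\Big)\mathbf 1[\mathbf z^{[0]}\vdash\sigma]\Big]=2^{-k}\sum_{\mathbf y\in\{0,1\}^3}\sum_{\mathbf k\in\mathcal P(k)}\big|\mathcal Z(\mathbf y,\mathbf k)\big|\Big(\prod_{s\in\{0,1\}^3}\Big(\frac{n_s+n_{\bar s}}{n}\Big)^{k_s}\Big)\exp\Big(-\tfrac{i\gamma}{2}(y^{[1]}-y^{[-1]})\Big)y^{[0]}.$$ In particular, this expectation depends on the triple only through the reduced configuration basis numbers $n_{0ab}+n_{1\bar a\bar b}$, $a,b\in\{0,1\}$, and is a polynomial in them.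
   Context: A clause on $n$ variables is $\sigma=((l_0,\nu_0),\dots,(l_{k-1},\nu_{k-1}))$ with $l_q\in\{0,\dots,n-1\}$, $\nu_q\in\{0,1\}$; $\mathbf x\in\{0,1\}^n$ satisfies $\sigma$ ($\mathbf x\vdash\sigma$) iff $T(x_{l_0}\oplus\nu_0,\dots,x_{l_{k-1}}\oplus\nu_{k-1})=1$. A random clause has all $l_q$ independent uniform in $\{0,\dots,n-1\}$ (repetitions allowed) and all $\nu_q$ independent uniform in $\{0,1\}$; $\mathbf E_\sigma$ is expectation over it. Configuration basis numbers of a triple of $q$-bit strings: $q_s=|\{j:(w^{[1]}_j,w^{[0]}_j,w^{[-1]}_j)=s\}|$, $s=s^{[1]}s^{[0]}s^{[-1]}\in\{0,1\}^3$; $\bar s$ (and $\bar a$ for a bit $a$) denotes complement. $\mathcal P(k)$ is the set of families $(k_s)_{s\in\{0,1\}^3}$ of nonnegative integers summing to $k$. $\mathcal Z(\mathbf y,\mathbf k)$ is the set of triples $(\mathbf w^{[1]},\mathbf w^{[0]},\mathbf w^{[-1]})$ of $k$-bit strings with $T(\mathbf w^{[t]})=y^{[t]}$ for all $t\in\{1,0,-1\}$ and configuration basis numbers $\mathbf k$. *)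

From HB Require Import structures.
From mathcomp Require Import all_boot all_order all_algebra.
From mathcomp Require Import all_classical all_reals all_analysis.
From mathcomp Require Import complex.
Set Implicit Arguments. Unset Strict Implicit. Unset Printing Implicit Defensive.
Import Order.TTheory GRing.Theory Num.Theory.
Local Open Scope ring_scope.
Local Open Scope complex_scope.

Definition bits (m : nat) := {ffun 'I_m -> bool}.

(* elements s = s^[1] s^[0] s^[-1] of {0,1}^3, encoded as ((s1, s0), sm1) *)
Definition triple := (bool * bool * bool)%type.
Definition t1 (s : triple) : bool := s.1.1.
Definition t0 (s : triple) : bool := s.1.2.
Definition tm1 (s : triple) : bool := s.2.
Definition tcomp (s : triple) : triple := (~~ t1 s, ~~ t0 s, ~~ tm1 s).

Definition cbn (m : nat) (w1 w0 wm1 : bits m) (s : triple) : nat :=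
  #|[set j : 'I_m | (w1 j, w0 j, wm1 j) == s]|.

(* a clause: ((l_0,nu_0),...,(l_{k-1},nu_{k-1})) *)
Definition clause (k n : nat) := {ffun 'I_k -> 'I_n * bool}.

Definition sat (k n : nat) (T : bits k -> bool) (x : bits n) (sigma : clause k n)
  : bool := T [ffun q => x (sigma q).1 (+) (sigma q).2].

(* E_sigma: expectation over a uniformly random clause (l_q uniform in
   {0..n-1}, nu_q uniform in {0,1}, all independent), i.e. the uniform
   average over the (2n)^k clauses. *)
Definition Eclause (R : rcfType) (k n : nat) (f : clause k n -> R[i]) : R[i] :=
  ((n ^ k * 2 ^ k)%N%:R)^-1 * \sum_(sigma : clause k n) f sigma.

Definition expi (R : realType) (t : R) : R[i] := cos t +i* sin t.

Definition Pk (k : nat) : {set {ffun triple -> 'I_k.+1}} :=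
  [set kk : {ffun triple -> 'I_k.+1} | \sum_(s : triple) (kk s : nat) == k].

Definition Zset (k : nat) (T : bits k -> bool) (y : triple)
  (kk : {ffun triple -> 'I_k.+1}) : {set bits k * bits k * bits k} :=
  [set w | [&& T w.1.1 == t1 y, T w.1.2 == t0 y, T w.2 == tm1 y &
            [forall s : triple, cbn w.1.1 w.1.2 w.2 s == kk s]]].

Definition clause_expect (R : realType) (k n : nat) (T : bits k -> bool) (gamma : R)
  (z1 z0 zm1 : bits n) : R[i] :=
  Eclause (fun sigma : clause k n =>
    expi (- (gamma / 2) * ((sat T z1 sigma)%:R - (sat T zm1 sigma)%:R))
    * ((sat T z0 sigma)%:R)%:C).

Definition reduced (n : nat) (z1 z0 zm1 : bits n) (a b : bool) : nat :=
  (cbn z1 z0 zm1 (false, a, b) + cbn z1 z0 zm1 (true, ~~ a, ~~ b))%N.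

From HB Require Import structures.
From mathcomp Require Import all_boot all_order all_algebra.
From mathcomp Require Import all_classical all_reals all_analysis.
From mathcomp Require Import complex.
Set Implicit Arguments. Unset Strict Implicit. Unset Printing Implicit Defensive.
Import Order.TTheory GRing.Theory Num.Theory.
Local Open Scope ring_scope.
Local Open Scope complex_scope.

(* A literal (l, nu) evaluates under (z1, z0, zm1) to the triple z_l (+) nu,
   so exactly n_s + n_(bar s) of the 2n literals evaluate to s.  Hence a
   uniform clause yields a k-tuple u of triples with weight
   prod_q (n_(u q) + n_(bar (u q))) / (2n)^k.  Reading u as three k-bit
   strings w, this is prod_s (n_s + n_(bar s))^(w_s) / (2n)^k with w_s the
   configuration basis numbers of w, and grouping the w by their truth values
   and configuration basis numbers produces the sets Z(y, k).  Only the pair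
   counts n_s + n_(bar s) enter, and they are the reduced configuration basis
   numbers. *)

Lemma card_ffun_comp_fiber (I A B : finType) (f : A -> B) (u : {ffun I -> B}) :
  #|[set g : {ffun I -> A} | [ffun i => f (g i)] == u]|
    = (\prod_i #|[set a | f a == u i]|)%N.
Proof.
rewrite (_ : (\prod_i _)%N = #|family (fun i => [set a | f a == u i])|); last first.
  by rewrite card_family foldrE big_map big_enum.
apply: eq_card => g; rewrite inE.
apply/eqP/familyP => [<- i | fg]; first by rewrite inE ffunE.
by apply/ffunP => i; rewrite ffunE; apply/eqP; have := fg i; rewrite inE.
Qed.

Lemma sum_ffun_comp (V : nmodType) (I A B : finType) (f : A -> B)
    (F : {ffun I -> B} -> V) :
  \sum_(g : {ffun I -> A}) F [ffun i => f (g i)]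
    = \sum_(u : {ffun I -> B}) F u *+ (\prod_i #|[set a | f a == u i]|)%N.
Proof.
rewrite (partition_big (fun g : {ffun I -> A} => [ffun i => f (g i)]) xpredT) //=.
apply: eq_bigr => u _; rewrite (eq_bigr (fun _ => F u)); last by move=> g /eqP ->.
rewrite sumr_const -card_ffun_comp_fiber; congr (_ *+ _).
by apply: eq_card => g; rewrite inE.
Qed.

Lemma prod_fiber_exp (R : comPzSemiRingType) (I B : finType) (F : B -> R) (u : I -> B) :
  \prod_i F (u i) = \prod_b F b ^+ #|[set i | u i == b]|.
Proof.
rewrite (partition_big u xpredT) //=; apply: eq_bigr => b _.
rewrite (eq_bigr (fun _ => F b)); last by move=> i /eqP ->.
by rewrite prodr_const; congr (_ ^+ _); apply: eq_card => i; rewrite inE.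
Qed.

Lemma prodr_div_exp (R : comUnitRingType) (I : finType) (F : I -> R) (e : I -> nat)
    (x : R) :
  \prod_i (F i / x) ^+ e i = (\prod_i F i ^+ e i) / x ^+ (\sum_i e i).
Proof.
under eq_bigr do rewrite exprMn.
by rewrite big_split /= prodrXr exprVn.
Qed.

Section Columns.
Variables (k : nat) (T : bits k -> bool).

Definition bits3 := (bits k * bits k * bits k)%type.

Definition columns (w : bits3) : {ffun 'I_k -> triple} :=
  [ffun q => (w.1.1 q, w.1.2 q, w.2 q)].

Definition rows (u : {ffun 'I_k -> triple}) : bits3 :=
  ([ffun q => t1 (u q)], [ffun q => t0 (u q)], [ffun q => tm1 (u q)]).

Lemma columnsK : cancel columns rows.
Proof.
by case=> [[a b] c]; congr (_, _, _); apply/ffunP => q; rewrite !ffunE.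
Qed.

Lemma rowsK : cancel rows columns.
Proof. by move=> u; apply/ffunP => q; rewrite !ffunE; case: (u q) => [[? ?] ?]. Qed.

Definition cbn3 (w : bits3) (s : triple) : nat := cbn w.1.1 w.1.2 w.2 s.

Lemma cbn3_columns w s : cbn3 w s = #|[set q | columns w q == s]|.
Proof. by apply: eq_card => q; rewrite !inE ffunE. Qed.

Lemma sum_cbn3 w : (\sum_s cbn3 w s)%N = k.
Proof.
rewrite -[RHS](card_ord k) -sum1_card (partition_big (columns w) xpredT) //=.
apply: eq_bigr => s _; rewrite cbn3_columns -sum1_card.
by apply: eq_bigl => q; rewrite inE.
Qed.

Definition config (w : bits3) : {ffun triple -> 'I_k.+1} :=
  [ffun s => inord (cbn3 w s)].

Lemma configE w s : config w s = cbn3 w s :> nat.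
Proof.
rewrite ffunE inordK // ltnS.
by apply: leq_trans (max_card _) _; rewrite card_ord.
Qed.

Lemma sum_config w : (\sum_s (config w s : nat))%N = k.
Proof. by under eq_bigr do rewrite configE; rewrite sum_cbn3. Qed.

Lemma config_Pk w : config w \in Pk k.
Proof. by rewrite inE sum_config. Qed.

Definition truth3 (w : bits3) : triple := (T w.1.1, T w.1.2, T w.2).

Lemma mem_Zset y kk w : (w \in Zset T y kk) = ((truth3 w, config w) == (y, kk)).
Proof.
case: y => [[y1 y0] ym1]; rewrite inE /truth3 !xpair_eqE /t1 /t0 /tm1 /= !andbA.
congr (_ && _); apply/forallP/eqP => [h | <- s]; last by rewrite configE.
by apply/ffunP => s; apply: val_inj; rewrite /= configE /cbn3 (eqP (h s)).
Qed.

Lemma sum_bits3_by_type (V : nmodType) (F : triple -> {ffun triple -> 'I_k.+1} -> V) :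
  \sum_(w : bits3) F (truth3 w) (config w)
    = \sum_(y : triple) \sum_(kk in Pk k) F y kk *+ #|Zset T y kk|.
Proof.
rewrite (partition_big (fun w => (truth3 w, config w)) (fun p => p.2 \in Pk k));
  last by move=> w _; apply: config_Pk.
rewrite [RHS]pair_big_dep /=; apply: eq_big => [[y kk] // | [y kk] _].
rewrite (eq_bigr (fun _ => F y kk)); last by move=> w /eqP [-> ->].
by rewrite sumr_const; congr (_ *+ _); apply: eq_card => w; rewrite mem_Zset.
Qed.

End Columns.

Section Literals.
Variables (n : nat) (z1 z0 zm1 : bits n).

Definition lit_values (p : 'I_n * bool) : triple :=
  (z1 p.1 (+) p.2, z0 p.1 (+) p.2, zm1 p.1 (+) p.2).

Definition pair_count (s : triple) : nat :=
  (cbn z1 z0 zm1 s + cbn z1 z0 zm1 (tcomp s))%N.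

Lemma card_lit_values s : #|[set p | lit_values p == s]| = pair_count s.
Proof.
rewrite /pair_count /cbn -!sum1dep_card big_mkcond.
rewrite -(pair_bigA _ (fun l b => if lit_values (l, b) == s then 1 else 0)%N) /=.
rewrite [in RHS]big_mkcond [X in (_ + X)%N]big_mkcond -big_split /=.
apply: eq_bigr => l _; rewrite big_bool /lit_values /tcomp /=.
by case: (z1 l) (z0 l) (zm1 l) s => [] [] [] [[[] []] []].
Qed.

Lemma pair_count_reduced s :
  pair_count s = reduced z1 z0 zm1 (t1 s (+) t0 s) (t1 s (+) tm1 s).
Proof.
case: s => [[[] a] b]; rewrite /pair_count /reduced /tcomp /t1 /t0 /tm1 /=;
  last by [].
by rewrite !negbK addnC.
Qed.

End Literals.

Section Expectation.
Variables (R : realType) (k n : nat) (T : bits k -> bool) (gamma : R)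
  (z1 z0 zm1 : bits n).

Definition clause_weight (y : triple) : R[i] :=
  expi (- (gamma / 2) * ((t1 y)%:R - (tm1 y)%:R)) * ((t0 y)%:R)%:C.

Lemma clause_expect_rows :
  clause_expect T gamma z1 z0 zm1 = ((n ^ k * 2 ^ k)%N%:R)^-1 *
    \sum_(sigma : clause k n)
      clause_weight (truth3 T (rows [ffun q => lit_values z1 z0 zm1 (sigma q)])).
Proof.
rewrite /clause_expect /Eclause; congr (_ * _); apply: eq_bigr => sigma _.
have -> : rows [ffun q => lit_values z1 z0 zm1 (sigma q)] =
    ([ffun q => z1 (sigma q).1 (+) (sigma q).2],
     [ffun q => z0 (sigma q).1 (+) (sigma q).2],
     [ffun q => zm1 (sigma q).1 (+) (sigma q).2]).
  by congr (_, _, _); apply/ffunP => q; rewrite !ffunE.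
by [].
Qed.

Lemma clause_expect_bits3 :
  clause_expect T gamma z1 z0 zm1 = ((n ^ k * 2 ^ k)%N%:R)^-1 *
    \sum_(w : bits3 k)
      clause_weight (truth3 T w) *+ (\prod_q pair_count z1 z0 zm1 (columns w q))%N.
Proof.
rewrite clause_expect_rows.
rewrite (sum_ffun_comp (lit_values z1 z0 zm1) (fun u => clause_weight (truth3 T (rows u)))).
rewrite (reindex (@columns k)) /=; last first.
  by exists (@rows k) => u _; [apply: columnsK | apply: rowsK].
congr (_ * _); apply: eq_bigr => w _; rewrite columnsK.
by under eq_bigr do rewrite card_lit_values.
Qed.

Lemma clause_expect_formula :
  clause_expect T gamma z1 z0 zm1 =
    ((2 ^ k)%N%:R)^-1 *
    \sum_(y : triple) \sum_(kk in Pk k)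
      (#|Zset T y kk|%:R
       * \prod_(s : triple)
           (((cbn z1 z0 zm1 s + cbn z1 z0 zm1 (tcomp s))%N%:R / n%:R) ^+ (kk s : nat))
       * expi (- (gamma / 2) * ((t1 y)%:R - (tm1 y)%:R))
       * ((t0 y)%:R)%:C).
Proof.
rewrite clause_expect_bits3 natrM invfM [_^-1 * _^-1]mulrC -mulrA; congr (_ * _).
rewrite mulr_sumr.
pose F y (kk : {ffun triple -> 'I_k.+1}) :=
  (\prod_s ((pair_count z1 z0 zm1 s)%:R / n%:R) ^+ kk s) * clause_weight y.
transitivity (\sum_(w : bits3 k) F (truth3 T w) (config w)).
  apply: eq_bigr => w _; rewrite /F prodr_div_exp sum_config.
  under [in RHS]eq_bigr do rewrite configE.
  rewrite -[clause_weight _ *+ _]mulr_natr natr_prod -natrX.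
  rewrite (prod_fiber_exp (fun s => (pair_count z1 z0 zm1 s)%:R : R[i]) (columns w)).
  under eq_bigr do rewrite -cbn3_columns.
  by rewrite mulrCA mulrC [_^-1 * _]mulrC.
rewrite sum_bits3_by_type; apply: eq_bigr => y _; apply: eq_bigr => kk _.
by rewrite -[F y kk *+ _]mulr_natl /F /clause_weight !mulrA.
Qed.

End Expectation.

Theorem mainTheorem10 (R : realType) (k n : nat) (hk : (0 < k)%N) (hn : (0 < n)%N)
  (T : bits k -> bool) (gamma : R) (z1 z0 zm1 : bits n) :
  clause_expect T gamma z1 z0 zm1 =
    ((2 ^ k)%N%:R)^-1 *
    \sum_(y : triple) \sum_(kk in Pk k)
      (#|Zset T y kk|%:R
       * \prod_(s : triple)
           (((cbn z1 z0 zm1 s + cbn z1 z0 zm1 (tcomp s))%N%:R / n%:R) ^+ (kk s : nat))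
       * expi (- (gamma / 2) * ((t1 y)%:R - (tm1 y)%:R))
       * ((t0 y)%:R)%:C)
  /\
  (forall z1' z0' zm1' : bits n,
     (forall a b : bool, reduced z1 z0 zm1 a b = reduced z1' z0' zm1' a b) ->
     clause_expect T gamma z1 z0 zm1 = clause_expect T gamma z1' z0' zm1').
Proof.
split; first exact: clause_expect_formula.
move=> z1' z0' zm1' same_reduced; rewrite !clause_expect_formula.
have same_pairs s : pair_count z1 z0 zm1 s = pair_count z1' z0' zm1' s.
  by rewrite !pair_count_reduced same_reduced.
congr (_ * _); apply: eq_bigr => y _; apply: eq_bigr => kk _.
by congr (_ * _ * _ * _); apply: eq_bigr => s _; rewrite -!/(pair_count _ _ _ s) same_pairs.
Qed.
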